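(* Let $\mathcal X$ and $\mathcal Y$ be Polish spaces and let $\{\mu_n\}_{n\in\mathbb N}\subset\wp(\mathcal X\times\mathcal Y)$ converge to $\mu$ in the weak-* topology. For each $n$ let $f_n:\mathcal X\to\wp_w(\mathcal Y)$ be the measurable map $f_n(x)=\mu_n(\cdot\mid x)$, and let $f:\mathcal X\to\wp_w(\mathcal Y)$ be $f(x)=\mu(\cdot\mid x)$. Let $E\subset\mathcal X$ be the set of all $x\in\mathcal X$ for which there exists a sequence $x_n\to x$ in $\mathcal X$ such that $\{f_n(x_n)\}_{n\in\mathbb N}$ does not converge to $f(x)$ in $\wp_w(\mathcal Y)$. If $\mu^{\mathcal X}(E)=0$, then $\mu_n\to\mu$ in $\wp_I(\mathcal X\times\mathcal Y)$.
   Context: For a Polish space $\mathcal S$, $\wp(\mathcal S)$ denotes the Borel probability measures and $\wp_w(\mathcal S)$ this set with the weak-* topology (weakest topology making $\mu\mapsto\int g\,d\mu$ continuous for all bounded continuous $g$). For $\mu\in\wp(\mathcal X\times\mathcal Y)$, $\mu^{\mathcal X}$ is the marginal and $\mu(\cdot\mid x)$ a regular conditional distribution on $\mathcal Y$ given $x$. Let $\psi(\mu)\in\wp(\mathcal X\times\wp_w(\mathcal Y))$ be $\psi(\mu)(dx,d\zeta)=\delta_{\mu(\cdot\mid x)}(d\zeta)\mu^{\mathcal X}(dx)$. The topology of information on $\wp(\mathcal X\times\mathcal Y)$ is the coarsest topology making $\psi$ continuous into $\wp_w(\mathcal X\times\wp_w(\mathcal Y))$; $\wp_I(\mathcal X\times\mathcal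 Y)$ denotes $\wp(\mathcal X\times\mathcal Y)$ with it. Thus $\mu_n\to\mu$ in $\wp_I$ iff $\psi(\mu_n)\to\psi(\mu)$ weak-*. *)

From HB Require Import structures.
From mathcomp Require Import all_boot all_order all_algebra.
From mathcomp Require Import all_classical all_reals all_analysis.
From mathcomp Require Import measurable_realfun.
Set Implicit Arguments. Unset Strict Implicit. Unset Printing Implicit Defensive.
Import Order.TTheory GRing.Theory Num.Theory.
Import numFieldNormedType.Exports.
Local Open Scope classical_set_scope.
Local Open Scope ring_scope.

(** Types carrying both a topology and a sigma-algebra.  Whether the
    sigma-algebra is the Borel one is an explicit hypothesis (borel_space). *)
#[short(type="topMeasType")]
HB.structure Definition TopMeasurable d := {T of Measurable d T & Topological T}.

(* the product X * Y carries the product topology and the product sigma-algebra *)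
HB.saturate prod.

Definition borel_space d (T : topMeasType d) : Prop :=
  @measurable d T = <<s [set U : set T | open U] >>.

Section polish.
Context (R : realType) (T : topologicalType).

Definition separable_space : Prop :=
  exists D : set T, countable D /\ closure D = [set: T].

Definition complete_compatible_metric (dist : T -> T -> R) : Prop :=
  [/\ (forall x y, 0 <= dist x y),
      (forall x y, dist x y = 0 <-> x = y),
      (forall x y, dist x y = dist y x),
      (forall x y z, dist x z <= dist x y + dist y z) /\
      (forall A : set T, open A <->
         (forall x, A x -> exists e : R, 0 < e /\ [set y | dist x y < e] `<=` A)) &
      (forall u : nat -> T,
         (forall e : R, 0 < e -> exists N, forall m n, (N <= m)%N -> (N <= n)%N ->
            dist (u m) (u n) < e) ->
         exists x : T, u @ \oo --> x)].

Definition completely_metrizable : Prop :=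
  exists dist : T -> T -> R, complete_compatible_metric dist.

Definition polish_space : Prop := separable_space /\ completely_metrizable.

End polish.

Definition bounded_continuous (R : realType) (T : topologicalType) (h : T -> R) :=
  continuous h /\ exists M : R, forall t, `|h t| <= M.

(** The weak-* topology on the Borel probability measures: the weakest
    topology making nu |-> \int h dnu continuous for all bounded continuous h
    (supremum of the initial topologies of these maps). *)
Section weak_topology_probability.
Context (R : realType) d (T : topMeasType d).

Definition bcfun := {h : T -> R | bounded_continuous h}.

Definition prob_integral (h : bcfun) (nu : probability T R) : \bar R :=
  (\int[nu]_t (sval h t)%:E)%E.

Definition weak_prob : Type :=
  sup_topology (fun h : bcfun => Topological.on (initial_topology (prob_integral h))).

HB.instance Definition _ := Topological.on weak_prob.

End weak_topology_probability.

Section marginal.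
Context d1 d2 (T1 : measurableType d1) (T2 : measurableType d2) (R : realType).
Variable mu : probability (T1 * T2)%type R.

Definition marginal : set T1 -> \bar R := pushforward mu fst.

Let marginal0 : marginal set0 = 0%E.
Proof. by rewrite /marginal /pushforward preimage_set0 measure0. Qed.

Let marginal_ge0 A : (0 <= marginal A)%E.
Proof. exact: measure_ge0. Qed.

Let marginal_sigma_additive : semi_sigma_additive marginal.
Proof.
move=> F mF tF mUF; rewrite /marginal /pushforward preimage_bigcup.
apply: measure_semi_sigma_additive.
- by move=> n; rewrite -[X in measurable X]setTI; exact: measurable_fst.
- apply/trivIsetP => /= i j _ _ ij; rewrite -preimage_setI.
  by move/trivIsetP : tF => /(_ _ _ _ _ ij) ->//; rewrite preimage_set0.
- by rewrite -preimage_bigcup -[X in measurable X]setTI; exact: measurable_fst.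
Qed.

HB.instance Definition _ := isMeasure.Build _ _ _ marginal
  marginal0 marginal_ge0 marginal_sigma_additive.

Let marginal_setT : marginal [set: T1] = 1%E.
Proof. by rewrite /marginal /pushforward preimage_setT probability_setT. Qed.

HB.instance Definition _ := Measure_isProbability.Build _ _ _ marginal marginal_setT.

(** [k] is a regular conditional distribution of mu on T2 given x : T1,
    i.e. k x = mu(. | x). *)
Definition regular_conditional (k : T1 -> probability T2 R) : Prop :=
  (forall B : set T2, measurable B -> measurable_fun [set: T1] ((fun x => k x B) : T1 -> \bar R)) /\
  (forall (A : set T1) (B : set T2), measurable A -> measurable B ->
     mu (A `*` B) = (\int[marginal]_(x in A) k x B)%E).

End marginal.

From HB Require Import structures.
From mathcomp Require Import all_boot all_order all_algebra.
From mathcomp Require Import all_classical all_reals all_analysis.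
From mathcomp Require Import measurable_realfun.
From mathcomp Require Import lra.
Set Implicit Arguments. Unset Strict Implicit. Unset Printing Implicit Defensive.
Import Order.TTheory GRing.Theory Num.Theory.
Import numFieldNormedType.Exports.
Local Open Scope classical_set_scope.
Local Open Scope ring_scope.

(* Testing psi(mu_n) against a bounded continuous g means comparing the
   integrals of G_n x := g (x, f_n x) under the marginals of mu_n with that of
   G x := g (x, f x) under the marginal of mu.  The marginals converge weakly,
   and off the null set E the G_n converge continuously to G: G_n x_n --> G x
   whenever x_n --> x.  For such data the k-Lipschitz upper envelopes
   phi_k x := sup_(n >= k, y) G_n y - k d(x, y) are bounded and continuous,
   dominate G_n for n >= k, and decrease to a limit below G off E.  Weak
   convergence for fixed k and dominated convergence in k then bound the
   limsup of the integrals of G_n by that of G; the same bound for -G gives the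
   liminf.  The G_n are compared only pointwise from above, so they need not be
   measurable. *)

Section bounded_integral.
Local Open Scope ereal_scope.
Context d (T : measurableType d) (R : realType) (m : probability T R).

Lemma ge0_le_integral_nonmeasurable (f g : T -> \bar R) :
  (forall x, 0 <= f x) -> (forall x, f x <= g x) ->
  \int[m]_x f x <= \int[m]_x g x.
Proof.
move=> f0 fg; have g0 x : 0 <= g x by apply: le_trans (fg x).
rewrite !ge0_integralE//; apply: ge_ereal_sup => _ [h /= hf <-].
apply: ereal_sup_ubound; exists h => //= x; apply: le_trans (hf x) _.
by rewrite /patch; case: ifP.
Qed.

Lemma le_integral_nonmeasurable (u v : T -> R) : (forall x, u x <= v x)%R ->
  \int[m]_x (u x)%:E <= \int[m]_x (v x)%:E.
Proof.
move=> uv; rewrite integralE [leRHS]integralE; apply: leeB.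
- apply: ge0_le_integral_nonmeasurable => x; first exact: funepos_ge0.
  by rewrite !funeposE /= !ge_max !le_max !lee_fin uv lexx !orbT.
- apply: ge0_le_integral_nonmeasurable => x; first exact: funeneg_ge0.
  by rewrite !funenegE /= !ge_max !le_max !lee_fin lerN2 uv lexx !orbT.
Qed.

Variables (u : T -> R) (M : R).
Hypothesis uM : forall x, (`|u x| <= M)%R.

Let integral_funeneg_le : \int[m]_x ((EFin \o u)^\- x) <= M%:E.
Proof.
rewrite -[M%:E]mule1 -(probability_setT m) -integral_cst//.
apply: ge0_le_integral_nonmeasurable => x; first exact: funeneg_ge0.
rewrite funenegE /= ge_max !lee_fin (le_trans (normr_ge0 _) (uM x)) andbT.
by rewrite (le_trans _ (uM x)) // ler_normr lexx orbT.
Qed.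

Let integral_funepos_le : \int[m]_x ((EFin \o u)^\+ x) <= M%:E.
Proof.
rewrite -[M%:E]mule1 -(probability_setT m) -integral_cst//.
apply: ge0_le_integral_nonmeasurable => x; first exact: funepos_ge0.
rewrite funeposE /= ge_max !lee_fin (le_trans (normr_ge0 _) (uM x)) andbT.
exact: le_trans (ler_norm _) (uM x).
Qed.

Let integral_funeneg_fin_num : \int[m]_x ((EFin \o u)^\- x) \is a fin_num.
Proof.
apply: fin_real; rewrite (le_lt_trans integral_funeneg_le) ?ltry// andbT.
by apply: lt_le_trans (integral_ge0 _ _) => // x _; exact: funeneg_ge0.
Qed.

Lemma bounded_integral_fin_num : \int[m]_x (u x)%:E \is a fin_num.
Proof.
rewrite integralE fin_numB integral_funeneg_fin_num andbT.
apply: fin_real; rewrite (le_lt_trans integral_funepos_le) ?ltry// andbT.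
by apply: lt_le_trans (integral_ge0 _ _) => // x _; exact: funepos_ge0.
Qed.

Lemma bounded_integralN : \int[m]_x (- u x)%:E = - \int[m]_x (u x)%:E.
Proof.
rewrite -(integralN (f := EFin \o u)) //.
by apply: fin_num_adde_defl; rewrite fin_numN integral_funeneg_fin_num.
Qed.

End bounded_integral.

Lemma cvge_near_le (R : realType) (u : nat -> \bar R) (l : \bar R) :
  l \is a fin_num -> u @ \oo --> l ->
  forall e : R, 0 < e -> \forall n \near \oo, (u n <= l + e%:E)%E.
Proof.
move=> lf; rewrite -(fineK lf) => /fine_cvgP [uf uc] e e0.
move/cvgrPdist_le : uc => /(_ e e0) ue; apply: filterS2 uf ue => n fn.
by rewrite -(fineK fn) -EFinD lee_fin ler_norml /= => /andP[h1 h2]; lra.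
Qed.

Lemma near_le_cvge (R : realType) (u : nat -> \bar R) (l : \bar R) :
  l \is a fin_num -> (forall n, u n \is a fin_num) ->
  (forall e : R, 0 < e -> \forall n \near \oo, (u n <= l + e%:E)%E) ->
  (forall e : R, 0 < e -> \forall n \near \oo, (- u n <= - l + e%:E)%E) ->
  u @ \oo --> l.
Proof.
move=> lf uf u_le Nu_le; rewrite -(fineK lf); apply/fine_cvgP; split; first exact: nearW.
apply/cvgrPdist_le => e e0; apply: filterS2 (u_le e e0) (Nu_le e e0) => n.
rewrite -(fineK lf) -(fineK (uf n)) -!EFinN -!EFinD !lee_fin /= ler_norml.
by move=> h1 h2; apply/andP; split; lra.
Qed.

Lemma increasing_extraction (u : nat -> nat) : (forall k, (k <= u k)%N) ->
  exists2 phi : nat -> nat, (forall j, (j <= phi j)%N) & increasing_seq (u \o phi).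
Proof.
move=> uk; pose fix phi j := if j is j'.+1 then (u (phi j')).+1 else 0%N.
exists phi; first by elim=> // j ih; rewrite ltnS (leq_trans ih (uk _)).
by apply/increasing_seqP => j; rewrite ltEnat; exact: uk (phi j.+1).
Qed.

Lemma increasing_seq_ge (sigma : nat -> nat) : increasing_seq sigma ->
  forall j, (j <= sigma j)%N.
Proof.
move=> /increasing_seqP incr; elim=> // j ih.
by apply: leq_ltn_trans ih _; have := incr j; rewrite ltEnat.
Qed.

Lemma increasing_seq_extend {T : topologicalType} (sigma : nat -> nat)
    (y : nat -> T) (x : T) : increasing_seq sigma -> y @ \oo --> x ->
  exists2 xs : nat -> T, xs @ \oo --> x & xs \o sigma = y.
Proof.
move=> incr yx; pose xs n :=
  if pselect (exists j, sigma j = n) is left h then y (projT1 (cid h)) else x.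
exists xs.
- move=> U Ux; have [J _ JU] := yx U Ux; exists (sigma J) => // n /= Jn.
  rewrite /xs; case: pselect => [h|_]; last exact: nbhs_singleton.
  case: cid => j /= jn; apply: JU => /=.
  by rewrite -(incr J j) leEnat jn.
- apply/funext => j /=; rewrite /xs; case: pselect => [h|[]]; last by exists j.
  by case: cid => i /= /(increasing_seq_injective incr) ->.
Qed.

Lemma cvg_diagonal_subseq {T U : topologicalType} (G_ : nat -> T -> U)
    (x : T) (l : U) :
  (forall xs : nat -> T, xs @ \oo --> x -> (fun n => G_ n (xs n)) @ \oo --> l) ->
  forall (sigma : nat -> nat) (y : nat -> T), increasing_seq sigma ->
    y @ \oo --> x -> (fun j => G_ (sigma j) (y j)) @ \oo --> l.
Proof.
move=> Gx sigma y incr yx; have [xs xsx <-] := increasing_seq_extend incr yx.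
have sigma_oo : sigma @ \oo --> \oo.
  apply/cvgnyPge => A; exists A => // j /= Aj.
  exact: leq_trans Aj (increasing_seq_ge incr j).
exact: cvg_comp sigma_oo (Gx xs xsx).
Qed.

Section compatible_metric.
Context (R : realType) (T : topologicalType) (dist : T -> T -> R).
Hypothesis hd : complete_compatible_metric dist.

Lemma dist_ge0 x y : 0 <= dist x y. Proof. by case: hd. Qed.
Lemma dist_xx x : dist x x = 0. Proof. by case: hd => _ h _ _ _; apply/h. Qed.
Lemma dist_sym x y : dist x y = dist y x. Proof. by case: hd. Qed.
Lemma dist_triangle x y z : dist x z <= dist x y + dist y z.
Proof. by case: hd => _ _ _ []. Qed.

Lemma dist_openP (A : set T) : open A <->
  (forall x, A x -> exists e : R, 0 < e /\ [set y | dist x y < e] `<=` A).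
Proof. by case: hd => _ _ _ []. Qed.

Lemma dist_ball_nbhs x e : 0 < e -> nbhs x [set y | dist x y < e].
Proof.
move=> e0; apply: open_nbhs_nbhs; split; last by rewrite /= dist_xx.
apply/dist_openP => y /= xy; exists (e - dist x y); split; first by rewrite subr_gt0.
by move=> z /=; have := dist_triangle x y z; lra.
Qed.

Lemma dist_cvg (u : nat -> T) x :
  (forall e, 0 < e -> \forall n \near \oo, dist x (u n) < e) -> u @ \oo --> x.
Proof.
move=> ux U; rewrite nbhsE => -[B [oB Bx] BU].
have [e [e0 eB]] := (dist_openP B).1 oB x Bx.
by apply: filterS (ux e e0) => n /eB /BU.
Qed.

Lemma dist_lipschitz_continuous (h : T -> R) (k : R) : 0 <= k ->
  (forall x y, h x <= h y + k * dist x y) -> continuous h.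
Proof.
move=> k0 hk x; apply/cvgrPdist_lt => e e0.
have ek0 : 0 < e / (k + 1) by rewrite divr_gt0 // ltr_wpDl.
have ekE : e / (k + 1) * (k + 1) = e by rewrite divfK // gt_eqF // ltr_wpDl.
apply: filterS (dist_ball_nbhs x ek0) => y /= xy.
have := hk x y; have := hk y x; rewrite dist_sym.
have : k * dist x y <= k * (e / (k + 1)) by rewrite ler_wpM2l // ltW.
rewrite ltr_norml; nra.
Qed.

End compatible_metric.

Section lipschitz_envelope.
Context (R : realType) (T : topologicalType) (dist : T -> T -> R).
Hypothesis hd : complete_compatible_metric dist.
Variables (G_ : nat -> T -> R) (M : R).
Hypothesis G_bd : forall n x, `|G_ n x| <= M.

Let envelope_terms k x :=
  [set r | exists n y, (k <= n)%N /\ r = G_ n y - k%:R * dist x y].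

Definition envelope k x := sup (envelope_terms k x).

Let envelope_terms_neq0 k x : envelope_terms k x !=set0.
Proof. by exists (G_ k x - k%:R * dist x x), k, x. Qed.

Let envelope_terms_ubound k x : ubound (envelope_terms k x) M.
Proof.
move=> _ [n [y [_ ->]]]; have := G_bd n y; rewrite ler_norml => /andP[_ GM].
have : 0 <= k%:R * dist x y by rewrite mulr_ge0 ?(dist_ge0 hd).
lra.
Qed.

Let le_envelope_term k n x y : (k <= n)%N ->
  G_ n y - k%:R * dist x y <= envelope k x.
Proof.
move=> kn; apply: ub_le_sup; first by exists M; exact: envelope_terms_ubound.
by exists n, y.
Qed.

Lemma le_envelope k n x : (k <= n)%N -> G_ n x <= envelope k x.
Proof.
by move=> kn; have := le_envelope_term x x kn; rewrite dist_xx // mulr0 subr0.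
Qed.

Lemma envelope_le_bound k x : envelope k x <= M.
Proof. exact: ge_sup. Qed.

Lemma envelope_bounded k x : `|envelope k x| <= M.
Proof.
rewrite ler_norml envelope_le_bound andbT.
by apply: le_trans (le_envelope x (leqnn k)); have := G_bd k x; rewrite ler_norml => /andP[].
Qed.

Lemma envelope_lipschitz k x y : envelope k x <= envelope k y + k%:R * dist x y.
Proof.
apply: ge_sup => // _ [n [z [kn ->]]].
have := le_envelope_term y z kn; have := dist_triangle hd y x z; rewrite (dist_sym hd y x).
have : 0 <= k%:R :> R by []; nra.
Qed.

Lemma envelope_continuous k : continuous (envelope k).
Proof. exact: (dist_lipschitz_continuous hd (ler0n _ k) (envelope_lipschitz k)). Qed.

Lemma envelope_nonincreasing x : nonincreasing_seq (envelope ^~ x).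
Proof.
apply/nonincreasing_seqP => k; apply: ge_sup => // _ [n [y [kn ->]]].
have := le_envelope_term x y (ltnW kn); have := dist_ge0 hd x y; rewrite -natr1; nra.
Qed.

(* If the envelope stayed above [l + e], its near-maximizers would be points
   [y_k] with [k dist x y_k] bounded, hence converging to [x], at which the
   [G_ n] exceed [l + e] along a subsequence. *)
Lemma envelope_le_diagonal_limit (x : T) (l : R) :
  (forall xs, xs @ \oo --> x -> (fun n => G_ n (xs n)) @ \oo --> l) ->
  forall e, 0 < e -> exists k, envelope k x <= l + e.
Proof.
move=> Gx e e0; apply: contrapT => /forallNP envelope_gt.
have bad k : exists p : nat * T,
    (k <= p.1)%N /\ l + e < G_ p.1 p.2 - k%:R * dist x p.2.
  have : l + e < envelope k x by rewrite ltNge; apply/negP/envelope_gt.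
  by move=> /sup_gt[|_ [n [y [kn ->]]] lt]//; exists (n, y).
have [c /all_and2 [c_ge c_bad]] := choice bad.
have c_x : (snd \o c) @ \oo --> x.
  apply: (dist_cvg hd) => eps eps0; near=> k => /=.
  have k_ge : (M - l) / eps <= k%:R by near: k; exact: nbhs_infty_ger.
  have := c_bad k; have := G_bd (c k).1 (c k).2; rewrite ler_norml => /andP[_].
  rewrite ler_pdivrMr // in k_ge; have := dist_ge0 hd x (c k).2.
  have : 0 <= k%:R :> R by []; nra.
have [phi phi_ge incr] := increasing_extraction c_ge.
have phi_oo : phi @ \oo --> \oo.
  by apply/cvgnyPge => A; exists A => // j /= Aj; exact: leq_trans Aj (phi_ge j).
have := cvg_diagonal_subseq Gx incr (cvg_comp _ _ phi_oo c_x).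
move=> /cvgrPdist_lt /(_ e e0) [J _ /(_ J (leqnn J))] /=.
have := c_bad (phi J); have := dist_ge0 hd x (c (phi J)).2.
have : 0 <= (phi J)%:R :> R by []; rewrite ltr_norml; nra.
Unshelve. all: end_near. Qed.

End lipschitz_envelope.

Lemma continuous_measurable_borel (R : realType) d (X : topMeasType d) (h : X -> R) :
  borel_space X -> continuous h -> measurable_fun setT h.
Proof.
move=> X_borel /continuousP h_open.
apply: (measurability _ (RGenOpens.measurableE R)) => _ [_ [a [b ->] <-]].
rewrite setTI X_borel; apply: sub_sigma_algebra; exact/h_open/interval_open.
Qed.

Definition weak_cvg (R : realType) d (X : topMeasType d)
    (P_ : nat -> probability X R) (P : probability X R) :=
  forall h : X -> R, bounded_continuous h ->
    (fun n => \int[P_ n]_x (h x)%:E)%E @ \oo --> (\int[P]_x (h x)%:E)%E.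

Section diagonal_integral.
Context (R : realType) d (X : topMeasType d).
Hypothesis X_borel : borel_space X.
Variable dist : X -> X -> R.
Hypothesis hd : complete_compatible_metric dist.
Variables (P_ : nat -> probability X R) (P : probability X R).
Hypothesis P_weak : weak_cvg P_ P.

Section limsup.
Variables (G_ : nat -> X -> R) (G : X -> R) (M : R).
Hypothesis G_bd : forall n x, `|G_ n x| <= M.
Hypothesis G_bd' : forall x, `|G x| <= M.
Variable N : set X.
Hypothesis mN : measurable N.
Hypothesis PN0 : P N = 0%E.
Hypothesis G_cvg : forall x, ~ N x -> forall xs : nat -> X, xs @ \oo --> x ->
  (fun n => G_ n (xs n)) @ \oo --> G x.

Let env := envelope dist G_.
Let env_inf x := inf (range (env ^~ x)).

Let env_lbound x : has_lbound (range (env ^~ x)).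
Proof.
exists (- M) => _ [k _ <-].
by have := envelope_bounded hd G_bd k x; rewrite ler_norml => /andP[].
Qed.

Let env_cvg x : env ^~ x @ \oo --> env_inf x.
Proof. exact: nonincreasing_cvgn (envelope_nonincreasing hd G_bd x) (env_lbound x). Qed.

Let env_inf_le k x : env_inf x <= env k x.
Proof. by apply: ge_inf; [exact: env_lbound | exists k]. Qed.

Let env_inf_bounded x : `|env_inf x| <= M.
Proof.
rewrite ler_norml (le_trans (env_inf_le 0 x) (envelope_le_bound hd G_bd _ _)) andbT.
apply: lb_le_inf; first by exists (env 0%N x), 0%N.
by move=> _ [k _ <-]; have := envelope_bounded hd G_bd k x; rewrite ler_norml => /andP[].
Qed.

Let env_inf_le_limit x : ~ N x -> env_inf x <= G x.
Proof.
move=> Nx; apply/ler_addgt0Pr => e e0.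
have [k ?] := envelope_le_diagonal_limit hd G_bd (G_cvg Nx) e0.
exact: le_trans (env_inf_le k x) _.
Qed.

Let measurable_env k : measurable_fun setT (env k).
Proof. apply: continuous_measurable_borel X_borel _; exact: envelope_continuous. Qed.

Let measurable_env_inf : measurable_fun setT env_inf.
Proof. by apply: (measurable_fun_cvg measurable_env) => x _; exact: env_cvg. Qed.

Let integral_env_cvg :
  (fun k => \int[P]_x (env k x)%:E)%E @ \oo --> (\int[P]_x (env_inf x)%:E)%E.
Proof.
have M_integrable : P.-integrable setT (EFin \o cst M).
  apply: measurable_bounded_integrable => //.
    by have := probability_setT P; rewrite /= => ->; exact: ltry.
  by exists `|M|; split; [exact: normr_real | move=> r rM y _; exact: ltW].
have env_dominated : {ae P, forall x n, setT x -> (`|(env n x)%:E| <= (EFin \o cst M) x)%E}.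
  by apply: aeW => x n _; rewrite abse_EFin lee_fin; exact: envelope_bounded.
have env_cvg_ae : {ae P, forall x, setT x ->
    (fun k => (env k x)%:E) @ \oo --> (env_inf x)%:E}.
  by apply: aeW => x _; apply/fine_cvgP; split; [exact: nearW | exact: env_cvg].
have measurable_env_E k : measurable_fun setT (fun x => (env k x)%:E).
  exact/measurable_EFinP/measurable_env.
by case: (dominated_convergence measurableT measurable_env_E
  ((measurable_EFinP _ _).2 measurable_env_inf) env_cvg_ae M_integrable env_dominated).
Qed.

(* [env_inf] is only below [G] off the null set [N]; it is changed into [-M] on
   [N] so as to compare integrands everywhere, [G] not being measurable. *)
Let integral_env_inf_le : (\int[P]_x (env_inf x)%:E <= \int[P]_x (G x)%:E)%E.
Proof.
pose H x := env_inf x * \1_(~` N) x + (- M) * \1_N x.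
have H_env x : ~ N x -> H x = env_inf x.
  move=> Nx; rewrite /H !indicE (mem_set (_ : (~` N) x)) // (memNset Nx).
  by rewrite mulr1 mulr0 addr0.
have H_le x : H x <= G x.
  have [Nx|Nx] := pselect (N x); last by rewrite H_env //; exact: env_inf_le_limit.
  rewrite /H !indicE (mem_set Nx) (memNset (_ : ~ (~` N) x)); last by move=> /(_ Nx).
  by rewrite mulr0 mulr1 add0r; have := G_bd' x; rewrite ler_norml => /andP[].
have mH : measurable_fun setT H.
  apply: measurable_funD; apply: measurable_funM => //.
  by apply: measurable_indic; exact: measurableC.
rewrite (@ae_eq_integral _ _ _ P setT (fun x => (H x)%:E) (fun x => (env_inf x)%:E)) //.
- exact: le_integral_nonmeasurable.
- exact/measurable_EFinP.
- exact/measurable_EFinP.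
- exists N; split => // x /= HN; apply: contrapT => Nx; apply: HN => _.
  by rewrite H_env.
Qed.

Lemma limsup_integral_le e : 0 < e -> \forall n \near \oo,
  (\int[P_ n]_x (G_ n x)%:E <= \int[P]_x (G x)%:E + e%:E)%E.
Proof.
move=> e0; have e20 : 0 < e / 2 by rewrite divr_gt0.
have [k _ hk] := cvge_near_le (bounded_integral_fin_num P env_inf_bounded)
  integral_env_cvg e20.
have env_bc : bounded_continuous (env k).
  by split; [exact: envelope_continuous | exists M; exact: envelope_bounded].
have := cvge_near_le (bounded_integral_fin_num P (envelope_bounded hd G_bd k))
  (P_weak env_bc) e20.
apply: filter_app; near=> n => weak_le.
have kn : (k <= n)%N by near: n; exact: nbhs_infty_ge.
apply: le_trans (_ : (\int[P]_x (env k x)%:E + (e / 2)%:E <= _)%E).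
  apply: le_trans weak_le; apply: le_integral_nonmeasurable => x; exact: le_envelope.
apply: le_trans (leeD2r _ (hk k (leqnn _))) _.
by rewrite -addeA -EFinD -splitr leeD2r.
Unshelve. all: end_near. Qed.

End limsup.

Lemma cvg_integral_diagonal (G_ : nat -> X -> R) (G : X -> R) (M : R) (N : set X) :
  (forall n x, `|G_ n x| <= M) -> (forall x, `|G x| <= M) ->
  measurable N -> P N = 0%E ->
  (forall x, ~ N x -> forall xs : nat -> X, xs @ \oo --> x ->
     (fun n => G_ n (xs n)) @ \oo --> G x) ->
  (fun n => \int[P_ n]_x (G_ n x)%:E)%E @ \oo --> (\int[P]_x (G x)%:E)%E.
Proof.
move=> G_bd G_bd' mN PN0 G_cvg.
have NG_bd n x : `|- G_ n x| <= M by rewrite normrN.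
have NG_bd' x : `|- G x| <= M by rewrite normrN.
have NG_cvg x : ~ N x -> forall xs : nat -> X, xs @ \oo --> x ->
    (fun n => - G_ n (xs n)) @ \oo --> - G x.
  by move=> Nx xs xsx; apply: cvgN; exact: G_cvg.
apply: near_le_cvge.
- exact: bounded_integral_fin_num G_bd'.
- by move=> n; exact: bounded_integral_fin_num (G_bd n).
- by move=> e e0; exact: (limsup_integral_le G_bd G_bd' mN PN0 G_cvg e0).
- move=> e e0; apply: filterS (limsup_integral_le NG_bd NG_bd' mN PN0 NG_cvg e0).
  by move=> n; rewrite (bounded_integralN _ (G_bd n)) (bounded_integralN _ G_bd').
Qed.

End diagonal_integral.

Lemma cvg_prob_integral (R : realType) d (T : topMeasType d)
    (mu_ : nat -> probability T R) (mu : probability T R) (h : bcfun R T) :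
  (fun n => mu_ n : weak_prob R T) @ \oo --> (mu : weak_prob R T) ->
  (fun n => prob_integral h (mu_ n)) @ \oo --> prob_integral h mu.
Proof.
move=> mu_cvg; have h_cvg := (cvg_sup _ _ (fmap_filter _ _)).1 mu_cvg h.
exact: (continuous_cvg _ (@initial_continuous _ _ (prob_integral h) mu) (h_cvg _)).
Qed.

Lemma integral_marginal (R : realType) dX dY (X : measurableType dX)
    (Y : measurableType dY) (m : probability (X * Y)%type R) (h : X -> R) (M : R) :
  measurable_fun setT h -> (forall x, `|h x| <= M) ->
  (\int[marginal m]_x (h x)%:E = \int[m]_p (h p.1)%:E)%E.
Proof.
move=> mh hM; rewrite /marginal integral_pushforward //; first exact/measurable_EFinP.
rewrite preimage_setT; apply: (measurable_bounded_integrable (f := h \o fst)) => //.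
- by have := probability_setT m; rewrite /= => ->; exact: ltry.
- exact: measurableT_comp mh measurable_fst.
- exists `|M|; split; first exact: normr_real.
  by move=> r Mr [a b] _ /=; apply: le_trans (hM a) (le_trans (ler_norm M) (ltW Mr)).
Qed.

Lemma weak_cvg_marginal (R : realType) dX dY (X : topMeasType dX)
    (Y : topMeasType dY) (mu_ : nat -> probability (X * Y)%type R)
    (mu : probability (X * Y)%type R) : borel_space X ->
  (fun n => mu_ n : weak_prob R (X * Y)%type) @ \oo --> (mu : weak_prob R (X * Y)%type) ->
  weak_cvg (fun n => marginal (mu_ n)) (marginal mu).
Proof.
move=> X_borel mu_cvg h [h_cont [M hM]].
have h_fst_bc : bounded_continuous (h \o fst : X * Y -> R).
  split; last by exists M => -[a b]; exact: hM.
  by move=> p; apply: continuous_comp; [exact: cvg_fst | exact: h_cont].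
have mh := continuous_measurable_borel X_borel h_cont.
rewrite (integral_marginal _ mh hM); under eq_fun do rewrite (integral_marginal _ mh hM).
exact: (cvg_prob_integral (h := exist _ _ h_fst_bc) mu_cvg).
Qed.

Theorem theorem3 (R : realType) (dX dY : measure_display)
  (X : topMeasType dX) (Y : topMeasType dY)
  (X_borel : borel_space X) (Y_borel : borel_space Y)
  (X_polish : polish_space R X) (Y_polish : polish_space R Y)
  (mu_ : nat -> probability (X * Y)%type R) (mu : probability (X * Y)%type R)
  (mu_cvg : (fun n => mu_ n : weak_prob R (X * Y)%type) @ \oo
              --> (mu : weak_prob R (X * Y)%type))
  (f_ : nat -> X -> probability Y R) (f : X -> probability Y R)
  (f_rcd : forall n, regular_conditional (mu_ n) (f_ n))
  (f_rcd' : regular_conditional mu f)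
  (E_null : (marginal mu).-negligible
     [set x | exists xn : nat -> X, xn @ \oo --> x /\
                ~ ((fun n => f_ n (xn n) : weak_prob R Y) @ \oo
                     --> (f x : weak_prob R Y))]) :
  forall g : (X * weak_prob R Y)%type -> R, bounded_continuous g ->
    (fun n => \int[marginal (mu_ n)]_x (g (x, (f_ n x : weak_prob R Y)))%:E)%E @ \oo
      --> (\int[marginal mu]_x (g (x, (f x : weak_prob R Y)))%:E)%E.
Proof.
move=> g [g_cont [M g_bd]].
have [_ [dist hd]] := X_polish.
have [N [mN PN0 bad_N]] := E_null.
apply: (cvg_integral_diagonal X_borel hd (weak_cvg_marginal X_borel mu_cvg)
  (M := M) _ _ mN PN0) => // x Nx xs xsx.
have fxs : (fun n => f_ n (xs n) : weak_prob R Y) @ \oo --> (f x : weak_prob R Y).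
  by apply: contrapT => nfxs; apply: Nx; apply: bad_N; exists xs.
have pair_cvg : (fun n => (xs n, (f_ n (xs n) : weak_prob R Y))) @ \oo -->
    ((x, (f x : weak_prob R Y)) : X * weak_prob R Y) := cvg_pair xsx fxs.
exact: (continuous_cvg _ (g_cont _) (pair_cvg _ _ _)).
Qed.
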